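(* Let $(\mathbb{X},\oplus,\otimes,\mathbb{0},\mathbb{1})$ be a linearly ordered, algebraically complete idempotent semifield, and let $\bm{A}\in\mathbb{X}^{n\times n}$ be a reciprocal matrix (i.e. $\bm{A}^{-}=\bm{A}$) with no zero entries, with spectral radius $\lambda$, and let $\bm{A}_{\lambda}=\lambda^{-1}\bm{A}$. Consider the problem of minimizing $d(\bm{A},\bm{x}\bm{x}^{-})$ over all regular vectors $\bm{x}\in\mathbb{X}^{n}$. Then the minimum value equals $\lambda$, and the set of all solutions is $\{\bm{x}=\bm{A}_{\lambda}^{\ast}\bm{u}: \bm{u}\in\mathbb{X}^n,\ \bm{u}\neq\bm{0}\}$.
   Context: An idempotent semifield is a set $\mathbb{X}$ with associative, commutative operations $\oplus$ (addition) and $\otimes$ (multiplication, usually omitted in writing) with neutral elements $\mathbb{0}$ and $\mathbb{1}$, multiplication distributing over addition, idempotent addition ($x\oplus x=x$), and every nonzero $x$ having an inverse $x^{-1}$ with $xx^{-1}=\mathbb{1}$. It is assumed linearly ordered by the order $x\le y \iff x\oplus y=y$, and algebraically complete: $x^p=a$ is solvable for every $a$ and integer $p>0$, so rational powers are defined. Matrix and vector operations use the usual formulas with $\oplus,\otimes$ in place of $+,\times$; $\bm{0}$ is the zero vector; a vector is regular if it has no zero entries. For a nonzero column vector $\bm{x}=(x_i)$, $\bm{x}^{-}$ is the row vector with entries $x_i^{-1}$ if $x_i\ne\mathbb{0}$ and $\mathbb{0}$ otherwise. For a nonzero matrix $\bm{A}=(a_{ij})$, $\bm{A}^{-}=(a^{-}_{ij})$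 with $a^{-}_{ij}=a_{ji}^{-1}$ if $a_{ji}\neq\mathbb{0}$ and $\mathbb{0}$ otherwise. The trace is $\mathrm{tr}\,\bm{A}=a_{11}\oplus\cdots\oplus a_{nn}$. The distance between square matrices is $d(\bm{A},\bm{B})=\mathrm{tr}(\bm{B}^{-}\bm{A})\oplus\mathrm{tr}(\bm{A}^{-}\bm{B})$. $\bm{I}$ is the identity matrix, $\bm{A}^0=\bm{I}$, $\bm{A}^p=\bm{A}^{p-1}\bm{A}$. The spectral radius of $\bm{A}$ of order $n$ is $\lambda=\bigoplus_{k=1}^{n}\bigoplus_{1\le i_1,\ldots,i_k\le n}(a_{i_1i_2}a_{i_2i_3}\cdots a_{i_ki_1})^{1/k}$. For a square matrix $\bm{M}$ of order $n$, $\bm{M}^{\ast}=\bm{I}\oplus\bm{M}\oplus\cdots\oplus\bm{M}^{n-1}$. *)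

(* idempotent semifields modelled as commutative semirings
   (comNzSemiRingType) with extra hypotheses stated in the theorem. *)
From mathcomp Require Import all_boot all_order all_algebra.
Set Implicit Arguments. Unset Strict Implicit. Unset Printing Implicit Defensive.
Import GRing.Theory.
Local Open Scope ring_scope.

Section TropicalDefs.
Variable X : comNzSemiRingType.
Variable inv : X -> X.
(* root p a : the solution of x^p = a (the power a^{1/p}) *)
Variable root : nat -> X -> X.

Definition sle (x y : X) : Prop := x + y = y.

Definition vminus n (x : 'cV[X]_n) : 'rV[X]_n :=
  \row_i (if x i 0 == 0 then 0 else inv (x i 0)).

Definition mxminus m n (A : 'M[X]_(m, n)) : 'M[X]_(n, m) :=
  \matrix_(i, j) (if A j i == 0 then 0 else inv (A j i)).

Definition mxdist n (A B : 'M[X]_n) : X :=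
  \tr (mxminus B *m A) + \tr (mxminus A *m B).

Definition regular n (x : 'cV[X]_n) : Prop := forall i, x i 0 != 0.

Fixpoint mxpow n (A : 'M[X]_n) (p : nat) : 'M[X]_n :=
  match p with
  | 0 => 1%:M
  | p'.+1 => mxpow A p' *m A
  end.

Definition kleene n (M : 'M[X]_n) : 'M[X]_n := \sum_(k < n) mxpow M k.

(* spectral radius: (+)_{k=1}^n (+)_{i_1..i_k} (a_{i1 i2} ... a_{ik i1})^{1/k};
   a sequence i_1..i_k is a function s : 'I_k -> 'I_n, and ordS is the cyclic successor *)
Definition spec_radius n (A : 'M[X]_n) : X :=
  \sum_(k < n) \sum_(s : {ffun 'I_k.+1 -> 'I_n})
     root k.+1 (\prod_(j < k.+1) A (s j) (s (ordS j))).

Definition smul n (c : X) (A : 'M[X]_n) : 'M[X]_n := \matrix_(i, j) (c * A i j).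

End TropicalDefs.

(* For regular [x], reciprocity of [A] makes both traces in [d(A, x x^-)] equal to
   [x^- A x], the sum of all [x_i^-1 a_ij x_j].  Along a cycle the factors [x_i^-1 x_j]
   telescope, so every cycle mean of [A] is at most [x^- A x], i.e. [lambda <= x^- A x];
   and [x^- A x <= lambda] holds exactly when [A_lambda x <= x].  Every cycle of
   [A_lambda] has weight at most [1], so removing cycles from a walk longer than [n]
   does not decrease its weight and [A_lambda^*] dominates all powers of [A_lambda].
   Hence [A_lambda A_lambda^* <= A_lambda^*], so every [A_lambda^* u] with [u != 0] is a
   regular solution, while any solution of [A_lambda x <= x] satisfies
   [x = A_lambda^* x]. *)

From mathcomp Require Import all_boot all_order all_algebra.
From mathcomp Require Import ring zify.
Set Implicit Arguments. Unset Strict Implicit. Unset Printing Implicit Defensive.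
Import GRing.Theory.
Local Open Scope ring_scope.

Section IdempotentSemiring.
Variable X : comNzSemiRingType.
Hypothesis Hidem : forall x : X, x + x = x.
Implicit Types x y z c : X.

Lemma sle_refl x : sle x x. Proof. exact: Hidem. Qed.

Lemma sle_trans y x z : sle x y -> sle y z -> sle x z.
Proof. by rewrite /sle => h1 h2; rewrite -h2 addrA h1. Qed.

Lemma sle_anti x y : sle x y -> sle y x -> x = y.
Proof. by rewrite /sle => h1 h2; rewrite -h1 addrC h2. Qed.

Lemma sle0x x : sle 0 x. Proof. by rewrite /sle add0r. Qed.

Lemma slex0 x : sle x 0 -> x = 0. Proof. by rewrite /sle addr0. Qed.

Lemma sle_addl x y : sle x (x + y). Proof. by rewrite /sle addrA Hidem. Qed.

Lemma sle_lub x y z : sle x z -> sle y z -> sle (x + y) z.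
Proof. by rewrite /sle => h1 h2; rewrite -addrA h2 h1. Qed.

Lemma sle_mull c x y : sle x y -> sle (c * x) (c * y).
Proof. by rewrite /sle => h; rewrite -mulrDr h. Qed.

Lemma sle_mulr c x y : sle x y -> sle (x * c) (y * c).
Proof. by rewrite /sle => h; rewrite -mulrDl h. Qed.

Lemma sle_mul x y x' y' : sle x x' -> sle y y' -> sle (x * y) (x' * y').
Proof. by move=> h1 h2; apply: (@sle_trans (x' * y)); [apply: sle_mulr|apply: sle_mull]. Qed.

Lemma sle_expr x y k : sle x y -> sle (x ^+ k) (y ^+ k).
Proof.
move=> h; elim: k => [|k IH]; first by rewrite !expr0; apply: sle_refl.
by rewrite !exprS; apply: sle_mul.
Qed.

Lemma sle_sum (I : Type) (r : seq I) (P : pred I) (F : I -> X) c :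
  (forall i, P i -> sle (F i) c) -> sle (\sum_(i <- r | P i) F i) c.
Proof.
move=> h; apply: (big_rec (fun y => sle y c)); first exact: sle0x.
by move=> i y Pi hy; apply: sle_lub => //; apply: h.
Qed.

Lemma sle_sum_term (I : finType) (F : I -> X) i : sle (F i) (\sum_j F j).
Proof. by rewrite (bigD1 i) //=; apply: sle_addl. Qed.

Lemma sle_sum2 (I : finType) (F G : I -> X) :
  (forall i, sle (F i) (G i)) -> sle (\sum_i F i) (\sum_i G i).
Proof. by move=> h; apply: sle_sum => i _; apply: sle_trans (h i) (sle_sum_term _ i). Qed.

Lemma sle_prod (I : Type) (r : seq I) (P : pred I) (F G : I -> X) :
  (forall i, P i -> sle (F i) (G i)) ->
  sle (\prod_(i <- r | P i) F i) (\prod_(i <- r | P i) G i).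
Proof.
move=> h; apply: (big_ind2 (@sle X)); [exact: sle_refl| |exact: h].
by move=> ????; apply: sle_mul.
Qed.

Definition vle n (x y : 'cV[X]_n) : Prop := forall i, sle (x i 0) (y i 0).

Lemma vle_mulmxl n (M : 'M[X]_n) (x y : 'cV[X]_n) : vle x y -> vle (M *m x) (M *m y).
Proof. by move=> h i; rewrite !mxE; apply: sle_sum2 => j; apply: sle_mull. Qed.

Lemma vle_mulmxr n (M N : 'M[X]_n) (x : 'cV[X]_n) :
  (forall i j, sle (M i j) (N i j)) -> vle (M *m x) (N *m x).
Proof. by move=> h i; rewrite !mxE; apply: sle_sum2 => j; apply: sle_mulr. Qed.

Lemma mxpow_mulC n (B : 'M[X]_n) k : B *m mxpow B k = mxpow B k *m B.
Proof. by elim: k => [|k IH] /=; [rewrite mulmx1 mul1mx | rewrite mulmxA IH]. Qed.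

Lemma kleene_mul_subeigen n (B : 'M[X]_n) (x : 'cV[X]_n) :
  vle (B *m x) x -> kleene B *m x = x.
Proof.
move=> hB; have hpow k : vle (mxpow B k *m x) x.
  elim: k => [|k IH] i /=; first by rewrite mul1mx; apply: sle_refl.
  by rewrite -mulmxA; apply: sle_trans (vle_mulmxl _ hB i) (IH i).
apply/matrixP => i j; rewrite (ord1 j) /kleene mulmx_suml summxE.
apply: sle_anti; first by apply: sle_sum => k _; apply: hpow.
have n_gt0 : (0 < n)%N by apply: leq_ltn_trans (ltn_ord i).
apply: sle_trans (sle_sum_term (fun k : 'I_n => (mxpow B k *m x) i 0) (Ordinal n_gt0)).
by rewrite /= mul1mx; apply: sle_refl.
Qed.

Definition walk_weight n (B : 'M[X]_n) (f : nat -> 'I_n) a b : X :=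
  \prod_(a <= t < b) B (f t) (f t.+1).

Lemma walk_weight_cat n (B : 'M[X]_n) f a b d : (a <= b <= d)%N ->
  walk_weight B f a d = walk_weight B f a b * walk_weight B f b d.
Proof. by case/andP => h1 h2; rewrite /walk_weight (big_cat_nat h1 h2). Qed.

Lemma walk_weight_le_mxpow n (B : 'M[X]_n) f m :
  sle (walk_weight B f 0 m) (mxpow B m (f 0%N) (f m)).
Proof.
elim: m => [|m IH]; first by rewrite /walk_weight big_geq //= mxE eqxx mulr1n; apply: sle_refl.
rewrite /walk_weight big_nat_recr //= -/(walk_weight B f 0 m) [X in sle _ X]mxE.
apply: sle_trans (sle_sum_term (fun k => mxpow B m (f 0%N) k * B k (f m.+1)) (f m)).
by apply: sle_mul => //; apply: sle_refl.
Qed.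

Definition skip_cycle n (f : nat -> 'I_n) p q t : 'I_n :=
  if (t <= p)%N then f t else f (t + (q - p))%N.

Lemma walk_weight_skip_cycle n (B : 'M[X]_n) f p q m : f p = f q -> (p <= q <= m)%N ->
  walk_weight B f 0 m =
  walk_weight B (skip_cycle f p q) 0 (m - (q - p)) * walk_weight B f p q.
Proof.
move=> hf /andP [hpq hqm].
rewrite (@walk_weight_cat _ _ _ 0 q) ?hqm // (@walk_weight_cat _ _ _ 0 p) ?hpq //.
rewrite (@walk_weight_cat _ _ _ 0 p (m - (q - p))); last by apply/andP; split; lia.
rewrite mulrAC; congr (_ * _ * _).
  apply: eq_big_nat => t ht; rewrite /skip_cycle !ifT //; lia.
rewrite /walk_weight -{1}(add0n q) -{1}(add0n p) !big_addn.
have -> : (m - (q - p) - p = m - q)%N by lia.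
apply: eq_big_nat => t ht.
have e1 : skip_cycle f p q (t + p) = f (t + q)%N.
  rewrite /skip_cycle; case: ifP => h; last by congr f; lia.
  by have -> : t = 0%N by lia.
have e2 : skip_cycle f p q (t + p).+1 = f (t + q).+1.
  by rewrite /skip_cycle ifF; [congr f | ]; lia.
by rewrite e1 e2.
Qed.

Lemma walk_repeats n (f : nat -> 'I_n) : exists p q, [/\ (p < q)%N, (q <= n)%N & f p = f q].
Proof.
have : ~~ injectiveb (fun t : 'I_n.+1 => f t).
  by apply/negP => /injectiveP /leq_card; rewrite !card_ord ltnn.
case/injectivePn => t1 [t2 hne heq].
case: (ltngtP t1 t2) => h.
- by exists t1, t2; split => //; rewrite -ltnS.
- by exists t2, t1; split => //; rewrite -ltnS.
- by move: hne; rewrite (val_inj h) eqxx.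
Qed.

Section Semifield.
Variable inv : X -> X.
Hypothesis Hinv : forall x : X, x != 0 -> x * inv x = 1.
Hypothesis Hlin : forall x y : X, x + y = x \/ x + y = y.

Lemma mul_neq0 x y : x != 0 -> y != 0 -> x * y != 0.
Proof.
move=> hx hy; apply: contraNneq hy => h.
by rewrite -[y]mul1r -(Hinv hx) (mulrC x) -mulrA h mulr0.
Qed.

Lemma inv_neq0 x : x != 0 -> inv x != 0.
Proof.
by move=> hx; apply/eqP => h; have := Hinv hx; rewrite h mulr0 => /eqP; rewrite eq_sym oner_eq0.
Qed.

Lemma exp_neq0 x k : x != 0 -> x ^+ k != 0.
Proof. by move=> hx; elim: k => [|k IH]; rewrite ?expr0 ?oner_eq0 // exprS mul_neq0. Qed.

Lemma invP x y : x * y = 1 -> inv x = y.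
Proof.
move=> h; have hx : x != 0 by apply: contra_eq_neq h => ->; rewrite mul0r eq_sym oner_neq0.
by rewrite -[inv x]mulr1 -h mulrA (mulrC (inv x)) Hinv // mul1r.
Qed.

Lemma sle_neq0 x y : sle x y -> x != 0 -> y != 0.
Proof. by move=> h; apply: contra_neq => y0; apply: slex0; rewrite -y0. Qed.

Lemma sle_pmul2l c x y : c != 0 -> sle (c * x) (c * y) -> sle x y.
Proof. by move=> hc /(sle_mull (inv c)); rewrite !mulrA !(mulrC (inv c)) Hinv // !mul1r. Qed.

(* Otherwise [y <= x]; for [y != 0], [t := x y^-1] satisfies [1 <= t <= t^p <= 1], so [t = 1]. *)
Lemma sle_pexp2 p x y : (0 < p)%N -> sle (x ^+ p) (y ^+ p) -> sle x y.
Proof.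
move=> hp h; case: (Hlin x y) => hxy; last by [].
have [y0|ny0] := eqVneq y 0.
  move: h; rewrite y0 expr0n (gtn_eqF hp) mulr0n => /slex0 xp0.
  have [->|nx0] := eqVneq x 0; first exact: sle_refl.
  by move: (exp_neq0 p nx0); rewrite xp0 eqxx.
set t := x * inv y.
have hx : x = t * y by rewrite /t -mulrA (mulrC (inv y)) Hinv // mulr1.
have ht1 : sle 1 t by rewrite -(Hinv ny0); apply: sle_mulr; rewrite /sle addrC.
have htp : sle (t ^+ p) 1.
  apply: (@sle_pmul2l (y ^+ p)); first exact: exp_neq0.
  by rewrite mulr1 mulrC -exprMn -hx.
have htt k : sle t (t ^+ k.+1).
  elim: k => [|k IH]; first by rewrite expr1; apply: sle_refl.
  by apply: sle_trans IH _; rewrite [t ^+ k.+2]exprS -{1}(mul1r (t ^+ k.+1)); apply: sle_mulr.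
have t1 : t = 1 by apply: sle_anti => //; apply: sle_trans (htt p.-1) _; rewrite prednK.
by rewrite hx t1 mul1r; apply: sle_refl.
Qed.

(* For regular [x] this is [x^- A x]. *)
Definition cross_sum n (A : 'M[X]_n) (x : 'cV[X]_n) : X :=
  \sum_i \sum_j inv (x i 0) * A i j * x j 0.

Lemma sle_cross_sum n (A : 'M[X]_n) (x : 'cV[X]_n) i j :
  sle (inv (x i 0) * A i j * x j 0) (cross_sum A x).
Proof.
apply: sle_trans (sle_sum_term (fun i => \sum_j inv (x i 0) * A i j * x j 0) i).
exact: (sle_sum_term (fun j => inv (x i 0) * A i j * x j 0) j).
Qed.

Lemma outer_vminusE n (x : 'cV[X]_n) i j : regular x ->
  (x *m vminus inv x) i j = x i 0 * inv (x j 0).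
Proof. by move=> hx; rewrite !mxE big_ord1 !mxE (negbTE (hx j)). Qed.

Lemma mxminus_outer n (x : 'cV[X]_n) : regular x ->
  mxminus inv (x *m vminus inv x) = x *m vminus inv x.
Proof.
move=> hx; apply/matrixP => i j; rewrite mxE !outer_vminusE //.
rewrite (negbTE (mul_neq0 (hx j) (inv_neq0 (hx i)))); apply: invP.
have -> : x j 0 * inv (x i 0) * (x i 0 * inv (x j 0)) =
   (x i 0 * inv (x i 0)) * (x j 0 * inv (x j 0)) by ring.
by rewrite !Hinv // mul1r.
Qed.

Lemma mxdist_outer n (A : 'M[X]_n) (x : 'cV[X]_n) :
  mxminus inv A = A -> regular x -> mxdist inv A (x *m vminus inv x) = cross_sum A x.
Proof.
move=> hA hx; rewrite /mxdist mxminus_outer // hA mxtrace_mulC Hidem /mxtrace.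
apply: eq_bigr => i _; rewrite mxE; apply: eq_bigr => j _; rewrite outer_vminusE //; ring.
Qed.

Lemma cross_sum_le n (A : 'M[X]_n) (x : 'cV[X]_n) c : regular x -> c != 0 ->
  sle (cross_sum A x) c <-> vle (smul (inv c) A *m x) x.
Proof.
move=> hx hc; split=> h.
  move=> i; rewrite mxE; apply: sle_sum => j _; rewrite mxE.
  have := sle_mull (inv c * x i 0) (sle_trans (sle_cross_sum A x i j) h).
  have -> : inv c * x i 0 * (inv (x i 0) * A i j * x j 0) =
    x i 0 * inv (x i 0) * (inv c * A i j * x j 0) by ring.
  have -> : inv c * x i 0 * c = c * inv c * x i 0 by ring.
  by rewrite !Hinv // !mul1r.
apply: sle_sum => i _; apply: sle_sum => j _.
have := h i; rewrite mxE => /(sle_trans (sle_sum_term (fun j => smul (inv c) A i j * x j 0) j)).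
rewrite mxE => /(sle_mull (c * inv (x i 0))).
have -> : c * inv (x i 0) * (inv c * A i j * x j 0) =
  c * inv c * (inv (x i 0) * A i j * x j 0) by ring.
have -> : c * inv (x i 0) * x i 0 = x i 0 * inv (x i 0) * c by ring.
by rewrite !Hinv // !mul1r.
Qed.

Section KleeneStar.
Variables (n : nat) (B : 'M[X]_n).
Hypothesis HBnz : forall i j, B i j != 0.

Lemma mxpow_le_walks m i j c :
  (forall f : nat -> 'I_n, f 0%N = i -> f m = j -> sle (walk_weight B f 0 m) c) ->
  sle (mxpow B m i j) c.
Proof.
elim: m j c => [|m IH] j c h.
  rewrite /= mxE; case: eqP => [e|_]; last by rewrite mulr0n; apply: sle0x.
  by rewrite mulr1n; have := h (fun _ => i) erefl e; rewrite /walk_weight big_geq.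
rewrite /= mxE; apply: sle_sum => k _.
suff hk : sle (mxpow B m i k) (c * inv (B k j)).
  apply: sle_trans (sle_mulr (B k j) hk) _.
  by rewrite -mulrA (mulrC (inv _)) Hinv // mulr1; apply: sle_refl.
apply: IH => f f0 fm.
pose g t := if (t <= m)%N then f t else j.
have gm : g m.+1 = j by rewrite /g ltnn.
have := h g f0 gm.
rewrite /walk_weight big_nat_recr //= /g leqnn ltnn fm.
rewrite (eq_big_nat _ _ (F2 := fun t => B (f t) (f t.+1))); last first.
  by move=> t ht; rewrite !ifT //; lia.
by move/(sle_mulr (inv (B k j))); rewrite -mulrA Hinv // mulr1.
Qed.

Hypothesis Hcycle : forall f p q, f p = f q -> (p < q)%N -> (q - p <= n)%N ->
  sle (walk_weight B f p q) 1.

Lemma walk_weight_le_kleene m f : sle (walk_weight B f 0 m) (kleene B (f 0%N) (f m)).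
Proof.
elim/ltn_ind: m f => m IH f.
case: (ltnP m n) => hm.
  rewrite /kleene summxE; apply: sle_trans (walk_weight_le_mxpow B f m) _.
  exact: (sle_sum_term (fun k : 'I_n => mxpow B k (f 0%N) (f m)) (Ordinal hm)).
have [p [q [hpq hqn hf]]] := walk_repeats f.
have hskip0 : skip_cycle f p q 0 = f 0%N by [].
have hskipm : skip_cycle f p q (m - (q - p)) = f m.
  rewrite /skip_cycle; case: ifP => h; last by congr f; lia.
  have -> : (m - (q - p) = p)%N by lia.
  by rewrite hf; congr f; lia.
have hpqm : (p <= q <= m)%N by apply/andP; split; lia.
rewrite (walk_weight_skip_cycle B hf hpqm).
apply: (@sle_trans (walk_weight B (skip_cycle f p q) 0 (m - (q - p)) * 1)).
  by apply: sle_mull; apply: Hcycle => //; lia.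
by rewrite mulr1 -hskip0 -hskipm; apply: IH; lia.
Qed.

Lemma mxpow_le_kleene m i j : sle (mxpow B m i j) (kleene B i j).
Proof. by apply: mxpow_le_walks => f <- <-; apply: walk_weight_le_kleene. Qed.

Lemma mul_kleene_le i j : sle ((B *m kleene B) i j) (kleene B i j).
Proof.
rewrite /kleene mulmx_sumr summxE; apply: sle_sum => k _.
by rewrite mxpow_mulC; apply: (mxpow_le_kleene k.+1).
Qed.

Lemma kleene_neq0 i j : kleene B i j != 0.
Proof.
rewrite /kleene summxE; have [<-|ne] := eqVneq i j.
  have n_gt0 : (0 < n)%N by apply: leq_ltn_trans (ltn_ord i).
  apply: (sle_neq0 (sle_sum_term (fun k : 'I_n => mxpow B k i i) (Ordinal n_gt0))).
  by rewrite /= mxE eqxx oner_eq0.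
have n_gt1 : (1 < n)%N.
  apply: contra_neqT ne; rewrite -leqNgt => n_le1.
  by apply: ord_inj; move: (ltn_ord i) (ltn_ord j); lia.
apply: (sle_neq0 (sle_sum_term (fun k : 'I_n => mxpow B k i j) (Ordinal n_gt1))).
by rewrite /= mul1mx.
Qed.

Lemma kleene_mul_regular (u : 'cV[X]_n) : u != 0 -> regular (kleene B *m u).
Proof.
move=> hu i; have [j uj] : exists j, u j 0 != 0.
  apply/existsP; apply: contraNT hu => /existsPn u0.
  by apply/eqP/matrixP => k l; rewrite (ord1 l) mxE; apply/eqP/negbNE/u0.
rewrite mxE; apply: (sle_neq0 (sle_sum_term (fun j => kleene B i j * u j 0) j)).
by rewrite mul_neq0 // kleene_neq0.
Qed.

Lemma kleene_mul_vle (u : 'cV[X]_n) : vle (B *m (kleene B *m u)) (kleene B *m u).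
Proof. by rewrite mulmxA; apply: vle_mulmxr => i j; apply: mul_kleene_le. Qed.

End KleeneStar.

Section SpectralRadius.
Variable root : nat -> X -> X.
Hypothesis Hroot : forall (p : nat) (a : X), (0 < p)%N -> root p a ^+ p = a.
Variables (n : nat) (A : 'M[X]_n).
Hypothesis Hn : (0 < n)%N.
Hypothesis Hnz : forall i j, A i j != 0.

Local Notation lambda := (spec_radius root A).

Lemma sle_cycle_mean_spec_radius (k : 'I_n) (s : {ffun 'I_k.+1 -> 'I_n}) :
  sle (root k.+1 (\prod_(j < k.+1) A (s j) (s (ordS j)))) lambda.
Proof.
apply: sle_trans (sle_sum_term (fun k : 'I_n => \sum_(s : {ffun 'I_k.+1 -> 'I_n})
  root k.+1 (\prod_(j < k.+1) A (s j) (s (ordS j)))) k).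
exact: (sle_sum_term (fun s : {ffun 'I_k.+1 -> 'I_n} =>
  root k.+1 (\prod_(j < k.+1) A (s j) (s (ordS j)))) s).
Qed.

Lemma spec_radius_neq0 : lambda != 0.
Proof.
pose i0 := Ordinal Hn.
have := sle_cycle_mean_spec_radius (k := i0) [ffun _ => i0].
rewrite big_ord1 !ffunE -{1}(expr1 (root 1 _)) Hroot // => /sle_neq0; apply.
exact: Hnz.
Qed.

(* Every cycle product of [A] is at most [(x^- A x)^k]: the factors [x_i^-1 ... x_j] telescope. *)
Lemma spec_radius_le_cross_sum (x : 'cV[X]_n) : regular x -> sle lambda (cross_sum A x).
Proof.
move=> hx; apply: sle_sum => k _; apply: sle_sum => s _.
apply: (@sle_pexp2 k.+1) => //; rewrite Hroot //.
set m := cross_sum A x.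
have hA a b : sle (A a b) (m * (x a 0 * inv (x b 0))).
  have := sle_mull (x a 0 * inv (x b 0)) (sle_cross_sum A x a b).
  have -> : x a 0 * inv (x b 0) * (inv (x a 0) * A a b * x b 0) =
     (x a 0 * inv (x a 0)) * (x b 0 * inv (x b 0)) * A a b by ring.
  by rewrite !Hinv // !mul1r mulrC.
apply: (@sle_trans (\prod_(j < k.+1) (m * (x (s j) 0 * inv (x (s (ordS j)) 0))))).
  by apply: sle_prod => j _; apply: hA.
rewrite big_split /= prodr_const card_ord big_split /=.
have -> : \prod_(i < k.+1) inv (x (s (ordS i)) 0) = \prod_(i < k.+1) inv (x (s i) 0).
  by rewrite [RHS](reindex_inj (@ordS_inj _)).
rewrite -big_split /=.
by rewrite big1 ?mulr1 => [|i _]; [apply: sle_refl | apply: Hinv].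
Qed.

Local Notation Alam := (smul (inv lambda) A).

Lemma smul_spec_radius_neq0 i j : Alam i j != 0.
Proof. by rewrite mxE mul_neq0 ?inv_neq0 ?spec_radius_neq0. Qed.

(* A cycle of length [k <= n] is a term of the spectral radius, so its [A]-weight is at
   most [lambda^k]. *)
Lemma walk_weight_cycle_le1 f p q : f p = f q -> (p < q)%N -> (q - p <= n)%N ->
  sle (walk_weight Alam f p q) 1.
Proof.
move=> hf hpq hqn.
have hk : ((q - p).-1 < n)%N by lia.
pose k := Ordinal hk.
have hL : (q - p = k.+1)%N by rewrite /= prednK //; lia.
pose s := [ffun j : 'I_k.+1 => f (p + j)%N].
have hP : \prod_(p <= t < q) A (f t) (f t.+1) = \prod_(j < k.+1) A (s j) (s (ordS j)).
  rewrite -{1}(add0n p) big_addn big_mkord hL; apply: eq_bigr => j _.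
  rewrite !ffunE /= addnC; congr (A _ _).
  have [hj|hj] : (j.+1 < k.+1 \/ j.+1 = k.+1)%N by have := ltn_ord j; lia.
    by rewrite modn_small //; congr f; lia.
  by rewrite hj modnn addn0 hf -addnS hj -hL subnKC // ltnW.
have hw : walk_weight Alam f p q = inv lambda ^+ (q - p) * \prod_(p <= t < q) A (f t) (f t.+1).
  by rewrite /walk_weight -prodr_const_nat -big_split /=; apply: eq_bigr => t _; rewrite mxE.
have hpow : sle (\prod_(p <= t < q) A (f t) (f t.+1)) (lambda ^+ (q - p)).
  rewrite hP hL -{1}(Hroot (\prod_(j < k.+1) A (s j) (s (ordS j))) (ltn0Sn k)).
  exact: sle_expr (sle_cycle_mean_spec_radius s).
rewrite hw; apply: sle_trans (sle_mull _ hpow) _.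
by rewrite -exprMn mulrC Hinv ?spec_radius_neq0 // expr1n; apply: sle_refl.
Qed.

End SpectralRadius.
End Semifield.
End IdempotentSemiring.

Theorem corollary1
  (X : comNzSemiRingType) (inv : X -> X) (root : nat -> X -> X)
  (* idempotent addition *)
  (Hidem : forall x : X, x + x = x)
  (* every nonzero element is invertible *)
  (Hinv : forall x : X, x != 0 -> x * inv x = 1)
  (* linear order x <= y iff x + y = y *)
  (Hlin : forall x y : X, x + y = x \/ x + y = y)
  (* algebraic completeness: root p a solves x^p = a *)
  (Hroot : forall (p : nat) (a : X), (0 < p)%N -> root p a ^+ p = a)
  (n : nat) (Hn : (0 < n)%N) (A : 'M[X]_n)
  (Hrecip : mxminus inv A = A)
  (Hnz : forall i j, A i j != 0) :
  let lambda := spec_radius root A in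
  let Alam := smul (inv lambda) A in
  (forall x : 'cV[X]_n, regular x ->
      sle lambda (mxdist inv A (x *m vminus inv x))) /\
  (exists x : 'cV[X]_n, regular x /\ mxdist inv A (x *m vminus inv x) = lambda) /\
  (forall x : 'cV[X]_n,
      (regular x /\ mxdist inv A (x *m vminus inv x) = lambda) <->
      (exists u : 'cV[X]_n, u != 0 /\ x = kleene Alam *m u)).
Proof.
move=> lambda Alam.
have lambda_le x : regular x -> sle lambda (cross_sum inv A x) :=
  spec_radius_le_cross_sum Hidem Hinv Hlin Hroot A (x := x).
have optimal_iff x : regular x ->
    mxdist inv A (x *m vminus inv x) = lambda <-> vle (Alam *m x) x.
  move=> hx; rewrite mxdist_outer // -cross_sum_le ?(spec_radius_neq0 Hidem Hroot Hn Hnz) //.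
  split=> [-> | h]; first exact: sle_refl.
  exact: sle_anti h (lambda_le x hx).
have Alam_nz := smul_spec_radius_neq0 Hidem Hinv Hroot Hn Hnz.
have solutions x : (regular x /\ mxdist inv A (x *m vminus inv x) = lambda) <->
    exists u, u != 0 /\ x = kleene Alam *m u.
  split=> [[hx /(optimal_iff x hx) hsub] | [u [hu ->]]].
    exists x; split; last by rewrite kleene_mul_subeigen.
    by apply: contraTneq (hx (Ordinal Hn)) => ->; rewrite mxE eqxx.
  have hreg := kleene_mul_regular Hidem Hinv Alam_nz hu.
  split=> //; apply/optimal_iff => //.
  have Alam_cycle := walk_weight_cycle_le1 Hidem Hinv Hroot Hn Hnz.
  exact (kleene_mul_vle Hidem Hinv Alam_nz Alam_cycle u).
split; first by move=> x hx; rewrite mxdist_outer //; apply: lambda_le.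
have one_neq0 : const_mx 1 != 0 :> 'cV[X]_n.
  by apply/eqP => /matrixP /(_ (Ordinal Hn) 0) /eqP; rewrite !mxE oner_eq0.
split; last exact: solutions.
exists (kleene Alam *m const_mx 1); apply/solutions.
by exists (const_mx 1).
Qed.
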